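(* Under the saturation assumption below, suppose that $\hat{\mathcal I}$ is not a subset of any $\mathcal I\in\mathbb I^*$. Then $C_2=\sum_{\mathcal I\in\mathbb I^*}T_{\mathcal I}-\sum_{\mathcal I\in\overline{\mathbb I}^*}\overline T_{\mathcal I}$ (as a function of $\delta\in(0,\bar\delta]$) can be written as $P(\delta)/D(\delta)$, where $P$ and $D$ are polynomials in $\delta$, $D$ is a finite product of factors of the form $|\alpha_{\mathcal E(\mathcal I)}|-|\alpha_{\mathcal I}|$ ($\mathcal I\in\mathbb I$) or $|\alpha_{\overline{\mathcal E}(\mathcal I)}|-|\alpha_{\mathcal I}|$ ($\mathcal I\in\overline{\mathbb I}$), and $P(0)>0$.
   Context: A matching model: finite connected simple graph $\mathcal G=(\mathcal V,\xi)$, $\mathcal V=\{1,\dots,n\}$, arrival distribution $\alpha$ on $\mathcal V$; FCFS policy (an arriving item of class $i$ is matched with the oldest present item whose class is a neighbour of $i$, otherwise it waits). $\mathcal E(i)$ is the neighbour set of $i$ in $\mathcal G$, $\mathcal E(V)=\bigcup_{i\in V}\mathcal E(i)$, $|\alpha_V|=\sum_{i\in V}\alpha_i$. An independent set is a non-empty set of pairwise non-adjacent nodes; $\mathbb I$ is the set of independent sets of $\mathcal G$. Fix distinct non-adjacent nodes $i^*,j^*$; $\overline{\mathcal G}$ is $\mathcal G$ with edge $\{i^*,j^*\}$ added, with neighbourhood map $\overline{\mathcal E}$ and set of independent sets $\overline{\mathbb I}$. $\mathbb I^*=\{\mathcal I\in\mathbb I: i^*\in\mathcal I\text{ or }j^*\in\mathcal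 I\}$, $\mathbb I^{-*}=\mathbb I\setminus\mathbb I^*$, $\overline{\mathbb I}^*=\{\mathcal I\in\overline{\mathbb I}: i^*\in\mathcal I\text{ or }j^*\in\mathcal I\}$. For $\mathcal I\in\mathbb I$ and an ordering $(i_1,\dots,i_m)$ of $\mathcal I$, with $\mathcal I_k=\{i_1,\dots,i_k\}$, set $T_{(i_1,\dots,i_m)}=\prod_{k=1}^m\frac{\alpha_{i_k}}{|\alpha_{\mathcal E(\mathcal I_k)}|-|\alpha_{\mathcal I_k}|}$; $T_{\mathcal I}$ is the sum over all orderings of $\mathcal I$. $\overline T_{\mathcal I}$ ($\mathcal I\in\overline{\mathbb I}$) is defined identically with $\mathcal E$ replaced by $\overline{\mathcal E}$. Saturation assumption: $\alpha_i=a_i+b_i\delta$ with constants $a_i>0$, $b_i\in\mathbb R$, such that for all $\delta\in(0,\bar\delta]$ (some $\bar\delta>0$) $\alpha$ is a probability distribution satisfying the stability condition $|\alpha_{\mathcal I}|<|\alpha_{\mathcal E(\mathcal I)}|$ for all $\mathcal I\in\mathbb I$; moreover $\sum_{i\in\mathcal E(\hat{\mathcal I})}a_i-\sum_{i\in\hat{\mathcal I}}a_i=0$ for exactly one independent set $\hat{\mathcal I}\in\mathbb I$ (called saturated). *)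

From HB Require Import structures.
From mathcomp Require Import all_boot all_order all_algebra.
From mathcomp Require Import reals.
Set Implicit Arguments. Unset Strict Implicit. Unset Printing Implicit Defensive.
Import Order.TTheory GRing.Theory Num.Theory.
Local Open Scope ring_scope.

Section MatchingDefs.
Variable n : nat.
Notation V := 'I_n.

Definition simple_graph (e : rel V) := symmetric e /\ irreflexive e.
Definition connected_graph (e : rel V) := forall x y : V, connect e x y.

Definition nbhd (e : rel V) (A : {set V}) : {set V} :=
  [set j | [exists i in A, e i j]].

Definition indep (e : rel V) (A : {set V}) : bool :=
  (A != set0) && [forall i in A, forall j in A, ~~ e i j].

Definition add_edge (e : rel V) (ist jst : V) : rel V :=
  fun x y => [|| e x y, (x == ist) && (y == jst) | (x == jst) && (y == ist)].

Variable R : realType.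

Definition amass (alpha : V -> R) (A : {set V}) : R := \sum_(i in A) alpha i.

Definition T_ord (e : rel V) (alpha : V -> R) (s : seq V) : R :=
  \prod_(k < size s)
    (alpha (tnth (in_tuple s) k) /
     (amass alpha (nbhd e [set x in take k.+1 s])
      - amass alpha [set x in take k.+1 s])).

Definition T_set (e : rel V) (alpha : V -> R) (A : {set V}) : R :=
  \sum_(s <- permutations (enum A)) T_ord e alpha s.

Definition alpha_of (a b : V -> R) (delta : R) : V -> R :=
  fun i => a i + b i * delta.

Definition Tstar_sum (e : rel V) (ist jst : V) (alpha : V -> R) : R :=
  \sum_(A : {set V} | indep e A && ((ist \in A) || (jst \in A))) T_set e alpha A.

Definition C2 (e : rel V) (ist jst : V) (a b : V -> R) (delta : R) : R :=
  Tstar_sum e ist jst (alpha_of a b delta)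
  - Tstar_sum (add_edge e ist jst) ist jst (alpha_of a b delta).

Definition saturation (e : rel V) (a b : V -> R) (dbar : R) (Ihat : {set V}) :=
  [/\ forall i, 0 < a i,
      0 < dbar,
      forall delta, 0 < delta <= dbar ->
        [/\ (forall i, 0 <= alpha_of a b delta i),
            \sum_i alpha_of a b delta i = 1 &
            forall A, indep e A ->
              amass (alpha_of a b delta) A < amass (alpha_of a b delta) (nbhd e A)],
      indep e Ihat /\ amass a (nbhd e Ihat) - amass a Ihat = 0 &
      forall A, indep e A -> amass a (nbhd e A) - amass a A = 0 -> A = Ihat].

Definition alphaP (a b : V -> R) (i : V) : {poly R} := (a i)%:P + b i *: 'X.
Definition gapP (e : rel V) (a b : V -> R) (A : {set V}) : {poly R} :=
  \sum_(i in nbhd e A) alphaP a b i - \sum_(i in A) alphaP a b i.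

Definition admissible_factor (e : rel V) (ist jst : V) (a b : V -> R) (f : {poly R}) :=
  exists A : {set V},
    (indep e A /\ f = gapP e a b A) \/
    (indep (add_edge e ist jst) A /\ f = gapP (add_edge e ist jst) a b A).

End MatchingDefs.

(* Every term T_(i_1..i_m) of C_2 is a
   product of quotients alpha_(i_k)(d) / g_k(d), where the "gap"
   g_k(d) = |alpha_(E(I_k))| - |alpha_(I_k)| is an affine polynomial in d
   attached to a prefix set I_k of an independent set.  We introduce the
   notion [ratrep f]: on (0, dbar], f = P / D where D is a product of
   admissible gap factors with D(0) > 0 and P(0) = f(0) D(0).  It is closed
   under sums, products, negation and division by an admissible factor that
   is positive on [0, dbar].
   The hypothesis that Ihat lies in no set of I^* guarantees that no prefix
   set I_k equals Ihat; as Ihat is the only independent set whose gap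
   vanishes at d = 0, every gap used is positive on the closed interval
   [0, dbar] (at d = 0 because an affine map positive on (0, dbar] is
   non-negative at 0).
   Hence C_2 has a rational representation, and it remains to show that
   C_2(0) > 0: adding the edge {i*, j*} only enlarges neighbourhoods, so it
   decreases each T_I at d = 0 and removes independent sets from I^*, among
   them {i*, j*}, whose contribution T_{i*,j*}(0) is positive. *)

From HB Require Import structures.
From mathcomp Require Import all_boot all_order all_algebra.
From mathcomp Require Import reals.
From mathcomp Require Import ring lra.
Import Order.TTheory GRing.Theory Num.Theory.
Local Open Scope ring_scope.

Set Implicit Arguments.
Unset Strict Implicit.

Section RationalRepresentation.
Variables (R : realFieldType) (admissible : {poly R} -> Prop) (dbar : R).

Definition ratrep (f : R -> R) : Prop :=
  exists (P : {poly R}) (Ds : seq {poly R}),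
  [/\ forall g, g \in Ds -> admissible g,
      0 < (\prod_(g <- Ds) g).[0],
      P.[0] = f 0 * (\prod_(g <- Ds) g).[0] &
      forall d, 0 < d <= dbar ->
        (\prod_(g <- Ds) g).[d] != 0 /\ f d = P.[d] / (\prod_(g <- Ds) g).[d]].

Lemma ratrep_ext f1 f2 : f1 =1 f2 -> ratrep f1 -> ratrep f2.
Proof.
move=> f12 [P [Ds [adm D0 P0 eq_f]]]; exists P, Ds; split => //.
  by rewrite -f12.
by move=> d hd; rewrite -f12; apply: eq_f.
Qed.

Lemma ratrep_poly (q : {poly R}) : ratrep (horner q).
Proof.
exists q, [::]; rewrite big_nil hornerC mulr1; split => //.
by move=> d _; rewrite hornerC divr1 oner_neq0.
Qed.

Lemma ratrep_opp f : ratrep f -> ratrep (fun d => - f d).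
Proof.
move=> [P [Ds [adm D0 P0 eq_f]]]; exists (- P), Ds; split => //.
  by rewrite hornerN P0 mulNr.
by move=> d hd; have [nz ->] := eq_f d hd; rewrite hornerN mulNr.
Qed.

Lemma ratrep_add f1 f2 : ratrep f1 -> ratrep f2 -> ratrep (fun d => f1 d + f2 d).
Proof.
move=> [P1 [D1 [adm1 D10 P10 eq1]]] [P2 [D2 [adm2 D20 P20 eq2]]].
exists (P1 * \prod_(g <- D2) g + P2 * \prod_(g <- D1) g), (D1 ++ D2).
rewrite big_cat; split.
- by move=> g; rewrite mem_cat => /orP[]; [apply: adm1 | apply: adm2].
- by rewrite hornerM mulr_gt0.
- by rewrite hornerD !hornerM P10 P20; ring.
- move=> d hd; have [nz1 ->] := eq1 d hd; have [nz2 ->] := eq2 d hd.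
  rewrite hornerD !hornerM mulf_neq0 //; split => //.
  by field; rewrite nz1 nz2.
Qed.

Lemma ratrep_mul f1 f2 : ratrep f1 -> ratrep f2 -> ratrep (fun d => f1 d * f2 d).
Proof.
move=> [P1 [D1 [adm1 D10 P10 eq1]]] [P2 [D2 [adm2 D20 P20 eq2]]].
exists (P1 * P2), (D1 ++ D2); rewrite big_cat; split.
- by move=> g; rewrite mem_cat => /orP[]; [apply: adm1 | apply: adm2].
- by rewrite hornerM mulr_gt0.
- by rewrite !hornerM P10 P20; ring.
- move=> d hd; have [nz1 ->] := eq1 d hd; have [nz2 ->] := eq2 d hd.
  rewrite !hornerM mulf_neq0 //; split => //.
  by field; rewrite nz1 nz2.
Qed.

Lemma ratrep_div f (g : {poly R}) :
  admissible g -> 0 < g.[0] -> (forall d, 0 < d <= dbar -> g.[d] != 0) ->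
  ratrep f -> ratrep (fun d => f d / g.[d]).
Proof.
move=> adm_g g0 g_nz [P [Ds [adm D0 P0 eq_f]]]; exists P, (g :: Ds).
rewrite big_cons hornerM; split.
- by move=> h; rewrite inE => /orP[/eqP-> | /adm].
- exact: mulr_gt0.
- by rewrite P0; field; rewrite gt_eqF.
- move=> d hd; have [nz ->] := eq_f d hd; have nzg := g_nz d hd.
  rewrite hornerM mulf_neq0 //; split => //.
  by field; rewrite nz nzg.
Qed.

Lemma ratrep_sum (I : eqType) (r : seq I) (Pr : pred I) (F : I -> R -> R) :
  (forall i, i \in r -> Pr i -> ratrep (F i)) ->
  ratrep (fun d => \sum_(i <- r | Pr i) F i d).
Proof.
elim: r => [|i r IHr] repF.
  by apply: ratrep_ext (ratrep_poly 0) => d; rewrite big_nil hornerC.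
have {}IHr := IHr (fun j jr => repF j (@mem_behead _ (i :: r) j jr)).
case Pi: (Pr i); last by apply: ratrep_ext IHr => d; rewrite big_cons Pi.
apply: ratrep_ext (ratrep_add (repF i (mem_head _ _) Pi) IHr) => d.
by rewrite big_cons Pi.
Qed.

Lemma ratrep_prod (I : eqType) (r : seq I) (Pr : pred I) (F : I -> R -> R) :
  (forall i, i \in r -> Pr i -> ratrep (F i)) ->
  ratrep (fun d => \prod_(i <- r | Pr i) F i d).
Proof.
elim: r => [|i r IHr] repF.
  by apply: ratrep_ext (ratrep_poly 1) => d; rewrite big_nil hornerC.
have {}IHr := IHr (fun j jr => repF j (@mem_behead _ (i :: r) j jr)).
case Pi: (Pr i); last by apply: ratrep_ext IHr => d; rewrite big_cons Pi.
apply: ratrep_ext (ratrep_mul (repF i (mem_head _ _) Pi) IHr) => d.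
by rewrite big_cons Pi.
Qed.

End RationalRepresentation.

Lemma affine_nonneg_at0 (R : realFieldType) (dbar g0 g1 : R) :
  0 < dbar -> (forall d, 0 < d <= dbar -> 0 < g0 + g1 * d) -> 0 <= g0.
Proof.
move=> dbar_gt0 pos; rewrite leNgt; apply/negP => g0_lt0.
have at_dbar : 0 < g0 + g1 * dbar by apply: pos; rewrite dbar_gt0 lexx.
have [g1_le0 | g1_gt0] := lerP g1 0; first by nra.
pose t := - g0 / (2 * g1).
have g1t : g1 * t = - g0 / 2 by rewrite /t; field; rewrite gt_eqF.
have t_gt0 : 0 < t by rewrite divr_gt0 ?oppr_gt0 ?mulr_gt0.
have [dbar_le_t | t_lt_dbar] := lerP dbar t.
  have : g1 * dbar <= g1 * t by rewrite ler_pM2l.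
  lra.
have : 0 < g0 + g1 * t by apply: pos; rewrite t_gt0 ltW.
lra.
Qed.

Section Graphs.
Variable n : nat.
Implicit Types (e : rel 'I_n) (A B : {set 'I_n}).

Lemma indep_subrel e (e' : rel 'I_n) B : subrel e e' -> indep e' B -> indep e B.
Proof.
move=> ee' /andP[B0 /forall_inP indepB]; rewrite /indep B0.
apply/forall_inP => i iB; apply/forall_inP => j jB.
by apply: contra (forall_inP (indepB i iB) j jB); apply: ee'.
Qed.

Lemma nbhd_subrel e (e' : rel 'I_n) B : subrel e e' -> nbhd e B \subset nbhd e' B.
Proof.
move=> ee'; apply/subsetP => j; rewrite !inE => /exists_inP[i iB eij].
by apply/exists_inP; exists i => //; apply: ee'.
Qed.

Lemma subrel_add_edge e ist jst : subrel e (add_edge e ist jst).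
Proof. by move=> x y exy; rewrite /add_edge exy. Qed.

Lemma indep_subset e A B : indep e A -> B \subset A -> B != set0 -> indep e B.
Proof.
move=> /andP[_ /forall_inP indepA] sBA B0; rewrite /indep B0.
apply/forall_inP => i iB; apply/forall_inP => j jB.
exact: forall_inP (indepA i (subsetP sBA i iB)) j (subsetP sBA j jB).
Qed.

Lemma pair_indep e ist jst :
  simple_graph e -> ~~ e ist jst -> indep e [set ist; jst].
Proof.
move=> [sym_e irr_e] no_edge; rewrite /indep; apply/andP; split.
  by apply/set0Pn; exists ist; rewrite !inE eqxx.
apply/forall_inP => i; rewrite !inE => /orP[]/eqP->;
  apply/forall_inP => j; rewrite !inE => /orP[]/eqP->;
  by rewrite ?irr_e // sym_e.
Qed.

Lemma pair_not_indep_bar e ist jst : ~~ indep (add_edge e ist jst) [set ist; jst].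
Proof.
apply/negP => /andP[_ /forall_inP indep_pair].
have /forall_inP/(_ jst) := indep_pair ist (set21 _ _).
by rewrite set22 /add_edge !eqxx orbT => /(_ isT).
Qed.

Lemma prefix_indep e A (s : seq 'I_n) (k : 'I_(size s)) :
  indep e A -> perm_eq s (enum A) ->
  [set x in take k.+1 s] \subset A /\ indep e [set x in take k.+1 s].
Proof.
move=> indepA sA.
have sub : [set x in take k.+1 s] \subset A.
  by apply/subsetP => x; rewrite inE => /mem_take; rewrite (perm_mem sA) mem_enum.
split => //; apply: indep_subset indepA sub _; apply/set0Pn.
exists (nth (tnth (in_tuple s) k) s k); rewrite inE -(nth_take _ (ltnSn k)).
by apply: mem_nth; rewrite size_take; case: ifP.
Qed.

End Graphs.

Section Evaluation.
Variables (n : nat) (R : realType) (a b : 'I_n -> R).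
Implicit Types (e : rel 'I_n) (A B : {set 'I_n}).

Lemma amass_alpha d A : amass (alpha_of a b d) A = amass a A + amass b A * d.
Proof. by rewrite /amass /alpha_of big_split /= mulr_suml. Qed.

Lemma alpha_at0 : alpha_of a b 0 =1 a.
Proof. by move=> i; rewrite /alpha_of mulr0 addr0. Qed.

Lemma alphaP_horner i d : (alphaP a b i).[d] = alpha_of a b d i.
Proof. by rewrite /alphaP hornerD hornerC hornerZ hornerX. Qed.

Lemma gapP_horner e A d : (gapP e a b A).[d] =
  amass (alpha_of a b d) (nbhd e A) - amass (alpha_of a b d) A.
Proof.
by rewrite /gapP hornerD hornerN !horner_sum /amass;
  congr (_ - _); apply: eq_bigr => i _; rewrite alphaP_horner.
Qed.

Lemma amass_subset (al : 'I_n -> R) A B :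
  (forall i, 0 <= al i) -> A \subset B -> amass al A <= amass al B.
Proof.
move=> al_ge0 sAB; rewrite /amass (big_setID (A := B) A) /= (setIidPr sAB) lerDl.
exact: sumr_ge0.
Qed.

End Evaluation.

Section Saturation.
Variables (n : nat) (R : realType) (e : rel 'I_n) (ist jst : 'I_n).
Variables (a b : 'I_n -> R) (dbar : R) (Ihat : {set 'I_n}).
Hypothesis sat : saturation e a b dbar Ihat.
Implicit Types (A B : {set 'I_n}).

Local Notation alpha d := (alpha_of a b d).
Local Notation gap e' B d :=
  (amass (alpha d) (nbhd e' B) - amass (alpha d) B).
Local Notation ebar := (add_edge e ist jst).

Lemma dbar_gt0 : 0 < dbar.
Proof. by case: sat. Qed.

Lemma a_gt0 i : 0 < a i.
Proof. by case: sat. Qed.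

Lemma alpha_ge0 d i : 0 <= d <= dbar -> 0 <= alpha d i.
Proof.
case/andP; rewrite le_eqVlt => /orP[/eqP <- _ | d_gt0 d_le].
  by rewrite alpha_at0 ltW ?a_gt0.
by case: sat => _ _ /(_ d); rewrite d_gt0 d_le => /(_ isT) [].
Qed.

Lemma gap_pos B d : indep e B -> B != Ihat -> 0 <= d <= dbar -> 0 < gap e B d.
Proof.
move=> indepB B_neq; case: sat => _ _ stable _ uniq_sat.
case/andP; rewrite le_eqVlt => /orP[/eqP <- _ | d_gt0 d_le]; last first.
  have d_in : 0 < d <= dbar by rewrite d_gt0 d_le.
  by rewrite subr_gt0; have [_ _ ->] := stable d d_in.
have gap0_ge0 : 0 <= amass a (nbhd e B) - amass a B.
  apply: (affine_nonneg_at0 (g1 := amass b (nbhd e B) - amass b B) dbar_gt0).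
  move=> d' hd'; have [_ _ /(_ B indepB)] := stable d' hd'.
  by rewrite -subr_gt0 !amass_alpha; lra.
rewrite !amass_alpha !mulr0 !addr0 lt_def gap0_ge0 andbT.
by apply: contra B_neq => /eqP/(uniq_sat B indepB) ->.
Qed.

(* The same holds in any supergraph, since gaps only grow with the edges. *)
Lemma gap_pos_subrel (e' : rel 'I_n) B d :
  subrel e e' -> indep e' B -> B != Ihat -> 0 <= d <= dbar -> 0 < gap e' B d.
Proof.
move=> ee' indepB B_neq hd.
apply: lt_le_trans (gap_pos (indep_subrel ee' indepB) B_neq hd) _.
by rewrite lerD2r amass_subset ?nbhd_subrel // => i; apply: alpha_ge0.
Qed.

Section Orderings.
Variables (e' : rel 'I_n) (A : {set 'I_n}) (s : seq 'I_n).
Hypotheses (ee' : subrel e e') (indepA : indep e' A) (Ihat_notin : ~~ (Ihat \subset A)).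
Hypothesis s_ordersA : perm_eq s (enum A).

Lemma prefix_indep_unsat (k : 'I_(size s)) :
  indep e' [set x in take k.+1 s] /\ [set x in take k.+1 s] != Ihat.
Proof.
have [sub indep_pre] := prefix_indep k indepA s_ordersA; split => //.
by apply: contraNneq Ihat_notin => <-.
Qed.

Lemma prefix_gap_pos (k : 'I_(size s)) d : 0 <= d <= dbar ->
  0 < gap e' [set x in take k.+1 s] d.
Proof. by have [? ?] := prefix_indep_unsat k; apply: gap_pos_subrel. Qed.

Lemma Tord_pos0 : 0 < T_ord e' (alpha 0) s.
Proof.
apply: prodr_gt0 => k _; rewrite divr_gt0 ?alpha_at0 ?a_gt0 //.
by apply: prefix_gap_pos; rewrite lexx ltW ?dbar_gt0.
Qed.

Lemma Tord_le0 : T_ord e' (alpha 0) s <= T_ord e (alpha 0) s.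
Proof.
apply: ler_prod => k _.
have d0 : (0 : R) <= 0 <= dbar by rewrite lexx ltW ?dbar_gt0.
have [indep_pre pre_neq] := prefix_indep_unsat k.
have gap_e := gap_pos (indep_subrel ee' indep_pre) pre_neq d0.
have alpha_pos : 0 < alpha 0 (tnth (in_tuple s) k) by rewrite alpha_at0 a_gt0.
have gap_e' := prefix_gap_pos k d0.
rewrite divr_ge0 ?(ltW alpha_pos) ?(ltW gap_e') //=.
apply: ler_wpM2l; first exact: ltW.
rewrite lef_pV2 ?posrE // lerD2r amass_subset ?nbhd_subrel //.
by move=> i; apply: alpha_ge0.
Qed.

Hypothesis gaps_admissible :
  forall B, indep e' B -> admissible_factor e ist jst a b (gapP e' a b B).

Lemma ratrep_Tord :
  ratrep (admissible_factor e ist jst a b) dbar (fun d => T_ord e' (alpha d) s).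
Proof.
apply: ratrep_prod => k _ _.
have [indep_pre _] := prefix_indep_unsat k.
apply: (ratrep_ext (f1 := fun d => (alphaP a b (tnth (in_tuple s) k)).[d] /
                                   (gapP e' a b [set x in take k.+1 s]).[d])).
  by move=> d; rewrite alphaP_horner gapP_horner.
apply: ratrep_div (ratrep_poly _ _ _); first exact: gaps_admissible.
  by rewrite gapP_horner prefix_gap_pos // lexx ltW ?dbar_gt0.
by move=> d /andP[d_gt0 d_le]; rewrite gapP_horner gt_eqF // prefix_gap_pos // ltW.
Qed.

End Orderings.

Section TSets.
Variables (e' : rel 'I_n) (A : {set 'I_n}).
Hypotheses (ee' : subrel e e') (indepA : indep e' A) (Ihat_notin : ~~ (Ihat \subset A)).

Lemma Tset_pos0 : 0 < T_set e' (alpha 0) A.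
Proof.
have enumA : enum A \in permutations (enum A) by rewrite mem_permutations.
rewrite /T_set (perm_big _ (perm_to_rem enumA)) big_cons.
apply: ltr_pwDl; first exact: Tord_pos0 (perm_refl _).
rewrite big_seq; apply: sumr_ge0 => s /mem_rem.
rewrite mem_permutations => s_ordersA.
exact: ltW (Tord_pos0 ee' indepA Ihat_notin s_ordersA).
Qed.

Lemma Tset_le0 : T_set e' (alpha 0) A <= T_set e (alpha 0) A.
Proof.
rewrite /T_set !big_seq; apply: ler_sum => s.
rewrite mem_permutations => s_ordersA.
exact: Tord_le0 ee' indepA Ihat_notin s_ordersA.
Qed.

End TSets.

Hypothesis Ihat_free : forall A, indep e A -> (ist \in A) || (jst \in A) ->
  ~~ (Ihat \subset A).

Lemma ratrep_Tstar e' : subrel e e' ->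
  (forall B, indep e' B -> admissible_factor e ist jst a b (gapP e' a b B)) ->
  ratrep (admissible_factor e ist jst a b) dbar
    (fun d => Tstar_sum e' ist jst (alpha d)).
Proof.
move=> ee' gaps_adm; apply: ratrep_sum => A _ /andP[indepA starA].
have Ihat_notin := Ihat_free (indep_subrel ee' indepA) starA.
apply: ratrep_sum => s; rewrite mem_permutations => s_ordersA _.
exact: ratrep_Tord ee' indepA Ihat_notin s_ordersA gaps_adm.
Qed.

Lemma Tstar_le0 e' : subrel e e' ->
  Tstar_sum e' ist jst (alpha 0) <=
  \sum_(A | (indep e A && ((ist \in A) || (jst \in A))) && indep e' A)
     T_set e (alpha 0) A.
Proof.
move=> ee'; rewrite /Tstar_sum.
rewrite (eq_bigl (fun A => (indep e A && ((ist \in A) || (jst \in A))) && indep e' A)).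
  apply: ler_sum => A /andP[/andP[indepA starA] indep'A].
  exact: Tset_le0 (Ihat_free indepA starA).
move=> A; case indep'A: (indep e' A); rewrite ?andbT ?andbF //=.
by rewrite (indep_subrel ee' indep'A).
Qed.

Lemma Tstar_lost_pos0 : simple_graph e -> ~~ e ist jst ->
  0 < \sum_(A | (indep e A && ((ist \in A) || (jst \in A))) && ~~ indep ebar A)
         T_set e (alpha 0) A.
Proof.
move=> graph_e no_edge.
have pair := pair_indep graph_e no_edge.
have pair_star : (ist \in [set ist; jst]) || (jst \in [set ist; jst]).
  by rewrite set21.
rewrite (bigD1 [set ist; jst]) /=; last by rewrite pair pair_star pair_not_indep_bar.
apply: ltr_pwDl; first exact: Tset_pos0 (Ihat_free pair pair_star).
apply: sumr_ge0 => A /andP[/andP[/andP[indepA starA] _] _].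
by rewrite ltW ?Tset_pos0 ?Ihat_free.
Qed.

Lemma C2_pos0 : simple_graph e -> ~~ e ist jst -> 0 < C2 e ist jst a b 0.
Proof.
move=> graph_e no_edge; rewrite /C2 subr_gt0.
rewrite [X in _ < X]/Tstar_sum (bigID (fun A => indep ebar A)) /=.
have := Tstar_le0 (@subrel_add_edge n e ist jst).
have := Tstar_lost_pos0 graph_e no_edge.
lra.
Qed.

End Saturation.

Lemma admissible_gap (n : nat) (R : realType) (e e' : rel 'I_n) (ist jst : 'I_n)
    (a b : 'I_n -> R) :
  e' = e \/ e' = add_edge e ist jst ->
  forall B, indep e' B -> admissible_factor e ist jst a b (gapP e' a b B).
Proof. by move=> [->|->] B indepB; exists B; [left | right]. Qed.

Theorem mainTheorem7 (n : nat) (R : realType) (e : rel 'I_n) (ist jst : 'I_n)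
  (a b : 'I_n -> R) (dbar : R) (Ihat : {set 'I_n}) :
  simple_graph e -> connected_graph e ->
  ist != jst -> ~~ e ist jst ->
  saturation e a b dbar Ihat ->
  (forall A : {set 'I_n}, indep e A -> (ist \in A) || (jst \in A) ->
     ~~ (Ihat \subset A)) ->
  exists (P : {poly R}) (Ds : seq {poly R}),
    [/\ (forall f, f \in Ds -> admissible_factor e ist jst a b f),
        0 < P.[0] &
        forall delta, 0 < delta <= dbar ->
          (\prod_(f <- Ds) f).[delta] != 0 /\
          C2 e ist jst a b delta = P.[delta] / (\prod_(f <- Ds) f).[delta]].
Proof.
move=> graph_e _ _ no_edge sat Ihat_free.
have rep_e := ratrep_Tstar sat Ihat_free (fun x y (exy : e x y) => exy)
  (@admissible_gap n R e e ist jst a b (or_introl erefl)).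
have rep_bar := ratrep_Tstar sat Ihat_free (@subrel_add_edge n e ist jst)
  (@admissible_gap n R e _ ist jst a b (or_intror erefl)).
have [P [Ds [adm D0 P0 rep_C2]]] := ratrep_add rep_e (ratrep_opp rep_bar).
exists P, Ds; split => //.
by rewrite P0 mulr_gt0 // (C2_pos0 sat Ihat_free graph_e no_edge).
Qed.
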